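(* Let $M$ be a $\mathrm{GF}(q)$-representable matroid, let $S$ and $T$ be disjoint subsets of $E(M)$ with $\kappa_M(S,T)=k$, and let $(A,B)$ be a partition of $E(M)$ with $S\subseteq A$, $T\subseteq B$ and $\lambda_M(A)=k$. Let $(C,D)$ be a partition of $E(M)-(S\cup T)$ such that $\lambda_{M/C\setminus D}(S)=k$. Then $(M^+_{(A,B)}/C\setminus D)|X=M^+_{(A,B)}|X$.
   Context: For a matroid $M$ with ground set $E$, $\lambda_M(X):=r_M(X)+r_M(E-X)-r(M)$, and for disjoint $S,T\subseteq E$, $\kappa_M(S,T):=\min\{\lambda_M(X):S\subseteq X\subseteq E-T\}$. Fix a representation of $M$ by an $r\times E$ matrix $D$ over $\mathrm{GF}(q)$, and for $Y\subseteq E$ let $\langle Y\rangle$ be the span of the columns of $D$ indexed by $Y$. If $\lambda_M(A)=k$ for a partition $(A,B)$ of $E$, then $\langle A\rangle\cap\langle B\rangle$ is a $k$-dimensional subspace of $\mathrm{GF}(q)^r$. The matroid $M^+_{(A,B)}$ is obtained from $M$ by adding a new set $X$ of $(q^k-1)/(q-1)$ elements, represented by vectors forming a copy of the projective geometry $\mathrm{PG}(k-1,q)$ inside $\langle A\rangle\cap\langle B\rangle$ (one vector from each 1-dimensional subspace of $\langle A\rangle\cap\langle B\rangle$); i.e. it is the matroid of the matrix $D$ extended by these columns. $|X$ denotes restriction to $X$. *)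

From HB Require Import structures.
From mathcomp Require Import all_boot all_algebra all_field.
Set Implicit Arguments. Unset Strict Implicit. Unset Printing Implicit Defensive.
Import GRing.Theory.
Local Open Scope ring_scope.

(* A represented matroid: ground set E (a finType), element e represented by
   the vector v e in F^r (row vectors, mathcomp convention). *)

Definition vspan (F : fieldType) (E : finType) (r : nat) (v : E -> 'rV[F]_r)
  (Y : {set E}) : 'M[F]_r := (\sum_(i in Y) <<v i>>)%MS.

Definition mrank (F : fieldType) (E : finType) (r : nat) (v : E -> 'rV[F]_r)
  (Y : {set E}) : nat := \rank (vspan v Y).

Definition minor_rank (F : fieldType) (E : finType) (r : nat) (v : E -> 'rV[F]_r)
  (C D : {set E}) (Y : {set E}) : nat :=
  (mrank v (Y :|: C) - mrank v C)%N.

Definition minor_lambda (F : fieldType) (E : finType) (r : nat) (v : E -> 'rV[F]_r)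
  (C D : {set E}) (Y : {set E}) : nat :=
  let G := ~: (C :|: D) in
  (minor_rank v C D Y + minor_rank v C D (G :\: Y) - minor_rank v C D G)%N.

Definition mlambda (F : fieldType) (E : finType) (r : nat) (v : E -> 'rV[F]_r)
  (Y : {set E}) : nat :=
  (mrank v Y + mrank v (~: Y) - mrank v setT)%N.

Definition kappa (F : fieldType) (E : finType) (r : nat) (v : E -> 'rV[F]_r)
  (S T : {set E}) : nat :=
  \big[minn/mlambda v S]_(Y : {set E} | (S \subset Y) && [disjoint Y & T])
     mlambda v Y.

(* x : X -> F^r picks exactly one (nonzero) vector from each 1-dimensional
   subspace of the subspace W, i.e. {x i} is a copy of PG(dim W - 1, q) in W. *)
Definition proj_geom_of (F : fieldType) (X : finType) (r : nat)
  (x : X -> 'rV[F]_r) (W : 'M[F]_r) : Prop :=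
  [/\ forall i, x i != 0,
      forall i, (x i <= W)%MS,
      forall i j, (x i <= x j)%MS -> i = j
    & forall w : 'rV[F]_r, w != 0 -> (w <= W)%MS -> exists i, (w <= x i)%MS].

(* The representation of M^+_(A,B): ground set E + X. *)
Definition ext_rep (F : fieldType) (E X : finType) (r : nat)
  (v : E -> 'rV[F]_r) (x : X -> 'rV[F]_r) : (E + X)%type -> 'rV[F]_r :=
  fun e => match e with inl a => v a | inr i => x i end.

From mathcomp Require Import all_boot all_algebra all_field.
From mathcomp Require Import zify.
Local Open Scope ring_scope.
Set Implicit Arguments. Unset Strict Implicit.

(* Write P = <A>, Q = <B> and K = <C>.  As <S u C> <= P + K and <T u C> <= Q + K,
   the connectivity lambda_{M/C\D}(S) = dim(<S u C> /\ <T u C>) - dim K is at most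
   dim((P + K) /\ (Q + K)) - dim K.  Splitting K = <C /\ A> + <C /\ B> into a part
   of P and a part of Q, the modular law yields
     dim((P + K) /\ (Q + K)) + dim(P /\ Q /\ K) = dim(P /\ Q) + dim K,
   so lambda_{M/C\D}(S) + dim(P /\ Q /\ K) <= lambda_M(A).  Both sides being k,
   P /\ Q meets K trivially; since X is represented inside P /\ Q, contracting C
   leaves the rank of every subset of X unchanged. *)

Section Modular.
Variables (F : fieldType) (n : nat) (P Q KA KB K : 'M[F]_n).
Hypotheses (sKAP : (KA <= P)%MS) (sKBQ : (KB <= Q)%MS) (defK : (K == KA + KB)%MS).

Lemma capmx_adds_split : (P :&: Q :&: K :=: (Q :&: KA) + (P :&: KB))%MS.
Proof.
apply: eqmx_trans (cap_eqmx (eqmx_refl _) (eqmxP defK)) _.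
apply/eqmxP/andP; split; last first.
  rewrite addsmx_sub !sub_capmx !capmxSl /= andbT.
  rewrite (submx_trans (capmxSr _ _) sKAP) (submx_trans (capmxSr _ _) sKBQ).
  rewrite (submx_trans (capmxSr _ _) (addsmxSl _ _)).
  by rewrite (submx_trans (capmxSr _ _) (addsmxSr _ _)).
have sKBPQ : (KB :&: P <= Q)%MS := submx_trans (capmxSl _ _) sKBQ.
rewrite (capmxC Q KA) (capmxC P KB) (addsmxC (KA :&: Q)%MS) (matrix_modl _ sKBPQ).
rewrite sub_capmx (submx_trans (capmxSl _ _) (capmxSr _ _)) andbT.
rewrite (addsmxC (KB :&: P)%MS) (matrix_modl _ sKAP) sub_capmx capmxSr.
by rewrite (submx_trans (capmxSl _ _) (capmxSl _ _)).
Qed.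

Lemma mxrank_cap_adds :
  (\rank ((P + K) :&: (Q + K)) + \rank (P :&: Q :&: K) = \rank (P :&: Q) + \rank K)%N.
Proof.
have eP : (P + K :=: P + KB)%MS.
  apply: eqmx_trans (adds_eqmx (eqmx_refl _) (eqmxP defK)) _.
  by rewrite addsmxA; apply: adds_eqmx (addsmx_idPl sKAP) (eqmx_refl _).
have eQ : (Q + K :=: Q + KA)%MS.
  apply: eqmx_trans (adds_eqmx (eqmx_refl _) (eqmxP defK)) _.
  by rewrite (addsmxC KA) addsmxA; apply: adds_eqmx (addsmx_idPl sKBQ) (eqmx_refl _).
have ePQ : (P + K + (Q + K) :=: P + Q)%MS.
  apply: eqmx_trans (adds_eqmx eP eQ) _.
  apply/eqmxP; rewrite (addsmxS (addsmxSl P KB) (addsmxSl Q KA)) andbT.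
  rewrite !addsmx_sub addsmxSl addsmxSr.
  by rewrite (submx_trans sKBQ (addsmxSr _ _)) (submx_trans sKAP (addsmxSl _ _)).
have eKK : ((Q :&: KA) :&: (P :&: KB) :=: KA :&: KB)%MS.
  apply/eqmxP; rewrite (capmxS (capmxSr Q KA) (capmxSr P KB)).
  rewrite !sub_capmx capmxSl capmxSr /=.
  by rewrite (submx_trans (capmxSr _ _) sKBQ) (submx_trans (capmxSl _ _) sKAP).
have := mxrank_sum_cap (P + K)%MS (Q + K)%MS; rewrite (cap_eqmx eP eQ) ePQ eP eQ.
have := mxrank_sum_cap P KB; have := mxrank_sum_cap Q KA; have := mxrank_sum_cap P Q.
have := mxrank_sum_cap (Q :&: KA)%MS (P :&: KB)%MS; rewrite eKK -capmx_adds_split.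
have := mxrank_sum_cap KA KB; rewrite -(eqmxP defK).
lia.
Qed.
End Modular.

Section Vspan.
Variables (F : fieldType) (E : finType) (r : nat) (v : E -> 'rV[F]_r).

Lemma vspan_sub1 (Y : {set E}) i : i \in Y -> (v i <= vspan v Y)%MS.
Proof. by move=> Yi; apply: (sumsmx_sup i) => //; rewrite genmxE. Qed.

Lemma vspan_subP (Y : {set E}) m (U : 'M[F]_(m, r)) :
  reflect (forall i, i \in Y -> (v i <= U)%MS) (vspan v Y <= U)%MS.
Proof.
apply: (iffP sumsmx_subP) => sYU i Yi; last by rewrite genmxE sYU.
by rewrite -genmxE sYU.
Qed.

Lemma vspanS (Y1 Y2 : {set E}) : Y1 \subset Y2 -> (vspan v Y1 <= vspan v Y2)%MS.
Proof. by move/subsetP=> sY12; apply/vspan_subP => i /sY12; apply: vspan_sub1. Qed.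

Lemma vspanU (Y1 Y2 : {set E}) :
  (vspan v (Y1 :|: Y2) :=: vspan v Y1 + vspan v Y2)%MS.
Proof.
apply/eqmxP/andP; split; last by rewrite addsmx_sub !vspanS ?subsetUl ?subsetUr.
apply/vspan_subP => i; rewrite in_setU => /orP[] Yi.
  exact: submx_trans (vspan_sub1 Yi) (addsmxSl _ _).
exact: submx_trans (vspan_sub1 Yi) (addsmxSr _ _).
Qed.

Lemma mlambda_cap (A : {set E}) :
  mlambda v A = \rank (vspan v A :&: vspan v (~: A))%MS.
Proof.
rewrite /mlambda /mrank -(setUCr A) vspanU.
by have := mxrank_sum_cap (vspan v A) (vspan v (~: A)); lia.
Qed.

Lemma minor_lambda_cap (C D Y Z : {set E}) :
  ~: (C :|: D) = Y :|: Z -> [disjoint Y & Z] ->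
  minor_lambda v C D Y
    = (\rank (vspan v (Y :|: C) :&: vspan v (Z :|: C))%MS - \rank (vspan v C))%N.
Proof.
move=> eG dYZ; rewrite /minor_lambda /minor_rank /mrank eG.
have -> : (Y :|: Z) :\: Y = Z.
  by rewrite setDUl setDv set0U; apply/setDidPl; rewrite disjoint_sym.
have -> : Y :|: Z :|: C = (Y :|: C) :|: (Z :|: C) by rewrite setUACA setUid.
have sCcap : (vspan v C <= vspan v (Y :|: C) :&: vspan v (Z :|: C))%MS.
  by rewrite sub_capmx !vspanS ?subsetUr.
have := mxrank_sum_cap (vspan v (Y :|: C)) (vspan v (Z :|: C)).
have := mxrankS sCcap; have := mxrankS (capmxSl (vspan v (Y :|: C)) (vspan v (Z :|: C))).
have := mxrankS (capmxSr (vspan v (Y :|: C)) (vspan v (Z :|: C))).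
rewrite (vspanU (Y :|: C) (Z :|: C)); lia.
Qed.

Lemma minor_rank_disjoint (C D Y : {set E}) :
  (vspan v Y :&: vspan v C)%MS = 0 -> minor_rank v C D Y = mrank v Y.
Proof. by move=> capYC0; rewrite /minor_rank /mrank vspanU mxrank_disjoint_sum // addnK. Qed.

Lemma minor_lambda_cap_le (S T A C D : {set E}) :
  [disjoint S & T] -> ~: (C :|: D) = S :|: T -> S \subset A -> T \subset ~: A ->
  (minor_lambda v C D S + \rank (vspan v A :&: vspan v (~: A) :&: vspan v C)
     <= mlambda v A)%N.
Proof.
move=> dST eG sSA sTB; rewrite mlambda_cap (minor_lambda_cap eG dST).
set P := vspan v A; set Q := vspan v (~: A); set K := vspan v C.
have eC : C = (C :&: A) :|: (C :&: ~: A) by rewrite -setIUr setUCr setIT.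
have defK : (K == vspan v (C :&: A) + vspan v (C :&: ~: A))%MS.
  by rewrite /K [in X in (X == _)%MS]eC; apply/eqmxP/vspanU.
have := mxrank_cap_adds (vspanS (subsetIr C A)) (vspanS (subsetIr C (~: A))) defK.
have : (\rank (vspan v (S :|: C) :&: vspan v (T :|: C)) <= \rank ((P + K) :&: (Q + K)))%N.
  by apply/mxrankS/capmxS; rewrite vspanU addsmxS ?vspanS.
have := mxrankS (capmxSl (P :&: Q)%MS K); rewrite -/P -/Q; lia.
Qed.

End Vspan.

Lemma vspan_imset (F : fieldType) (E E' : finType) (r : nat) (v : E -> 'rV[F]_r)
    (f : E' -> E) (Y : {set E'}) :
  injective f -> vspan v (f @: Y) = vspan (v \o f) Y.
Proof. by move=> injf; rewrite /vspan big_imset //; move=> i j _ _ /injf. Qed.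

Theorem lemma4p1 (F : finFieldType) (E : finType) (r : nat)
  (v : E -> 'rV[F]_r) (S T A C D : {set E}) (k : nat)
  (X : finType) (x : X -> 'rV[F]_r) :
  [disjoint S & T] ->
  kappa v S T = k ->
  S \subset A -> T \subset ~: A ->
  mlambda v A = k ->
  proj_geom_of x (vspan v A :&: vspan v (~: A))%MS ->
  C :|: D = ~: (S :|: T) -> [disjoint C & D] ->
  minor_lambda v C D S = k ->
  forall Y : {set X},
    minor_rank (ext_rep v x) (inl @: C) (inl @: D) (inr @: Y)
    = mrank (ext_rep v x) (inr @: Y).
Proof.
move=> dST _ sSA sTB lamA [_ sxW _ _] eCD _ lamS Y.
have eG : ~: (C :|: D) = S :|: T by rewrite eCD setCK.
have capWC0 : \rank (vspan v A :&: vspan v (~: A) :&: vspan v C)%MS = 0%N.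
  by have := minor_lambda_cap_le v dST eG sSA sTB; lia.
apply: minor_rank_disjoint; rewrite !vspan_imset; [|exact: inl_inj|exact: inr_inj].
apply/eqP; rewrite -mxrank_eq0 -leqn0 -[leqRHS]capWC0 mxrankS // capmxS //.
by apply/vspan_subP => i _; apply: sxW.
Qed.
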